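(* Let $A=\mathbb Q[x_1,x_2,\dots]$ with $\deg x_n=n$, let $d$ be the derivation of $A$ with $d x_n=x_{n-1}$ for $n\ge2$ and $d x_1=0$, and let $J=\ker d=\bigoplus_n J_n$ with the induced grading. Then the Poincaré series $J(t)=\sum_{n\ge0}(\dim J_n)t^n$ is $$J(t)=\frac{1}{(1-t^2)(1-t^3)(1-t^4)\cdots}+t .$$ *)

From mathcomp Require Import all_boot all_algebra.
From mathcomp Require Import mpoly.
Set Implicit Arguments. Unset Strict Implicit. Unset Printing Implicit Defensive.
Import GRing.Theory.
Local Open Scope ring_scope.

(* The polynomial ring Q[x_1, ..., x_N]; the variable 'X_i (i : 'I_N)
   stands for x_(i+1), of weight i+1. *)

Definition wdeg (N : nat) (m : 'X_{1..N}) : nat := (\sum_(i < N) i.+1 * m i)%N.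

(* p is homogeneous of weighted degree n (0 is homogeneous of every degree) *)
Definition whomog (N n : nat) (p : {mpoly rat[N]}) : bool :=
  all (fun m => wdeg m == n) (msupp p).

(* the derivation d with d x_1 = 0, d x_k = x_(k-1) (k >= 2):
   d p = sum_{k >= 2} x_(k-1) * dp/dx_k *)
Definition dA (N : nat) (p : {mpoly rat[N]}) : {mpoly rat[N]} :=
  \sum_(j < N) \sum_(i < N | nat_of_ord i == j.+1) 'X_j * p^`M(i).

Definition Jdeg (N n : nat) (p : {mpoly rat[N]}) : Prop :=
  whomog n p /\ dA p = 0.

Definition has_dim (N : nat) (S : {mpoly rat[N]} -> Prop) (k : nat) : Prop :=
  exists b : 'I_k -> {mpoly rat[N]},
    [/\ (forall i, S (b i)),
        (forall c : 'I_k -> rat, \sum_(i < k) c i *: b i = 0 -> forall i, c i = 0)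
      & (forall p, S p -> exists c : 'I_k -> rat, p = \sum_(i < k) c i *: b i)].

(* coefficient of t^n in 1/((1-t^2)(1-t^3)...) + t, computed by expanding each
   1/(1-t^k) as a geometric series truncated at degree n (factors with k > n
   and terms of degree > n do not affect the coefficient of t^n). *)
Definition poincare_coef (n : nat) : rat :=
  (\prod_(2 <= k < n.+1) \sum_(j < n.+1) ('X^(k * j) : {poly rat}))`_n
  + (n == 1%N)%:R.

(* d maps the weight-n part A_n onto A_(n-1) as soon as n >= 2. Indeed, if x_t is
   the highest variable of a monomial x^m of weight n-1 and mu trades one factor x_t
   of m for x_(t+1), then d x^mu = x^m + (monomials containing x_(t+1)), so a
   descending induction on the highest variable shows that x^m lies in d A_n.
   Hence dim J_n = dim A_n - dim A_(n-1). Multiplication by x_1 identifies A_(n-1)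
   with the span of the weight-n monomials divisible by x_1, so dim J_n counts the
   weight-n monomials free of x_1, i.e. the partitions of n into parts >= 2: the
   coefficient of t^n in 1/((1-t^2)(1-t^3)...). In weights 0 and 1, d vanishes on
   A_n, and J_1 = Q x_1 contributes the extra t. *)

From HB Require Import structures.
From mathcomp Require Import all_boot all_algebra.
From mathcomp Require Import mpoly.
From mathcomp Require Import zify.
Set Implicit Arguments. Unset Strict Implicit. Unset Printing Implicit Defensive.
Import GRing.Theory.
Local Open Scope ring_scope.

Lemma wdegE (N : nat) (m : 'X_{1..N}) : wdeg m = mnmwgt m.
Proof. by apply: eq_bigr => i _; rewrite mulnC. Qed.

Lemma whomogE (N n : nat) (p : {mpoly rat[N]}) :
  whomog n p = (p \is n.-homog for mnmwgt).
Proof. by rewrite dhomogE; apply: eq_all => m; rewrite /= wdegE. Qed.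

Lemma leq_mnmwgt (N : nat) (m : 'X_{1..N}) (i : 'I_N) : (i.+1 * m i <= mnmwgt m)%N.
Proof. by rewrite /mnmwgt (bigD1 i) //= mulnC leq_addr. Qed.

Lemma mnmwgt_lower (N : nat) (m : 'X_{1..N}) (i j : 'I_N) :
  m i != 0%N -> i = j.+1 :> nat -> mnmwgt (U_(j) + (m - U_(i)))%MM = (mnmwgt m).-1.
Proof.
move=> mi_neq0 ij; have := mnmwgtD (m - U_(i)) U_(i).
rewrite submK ?lep1mP // mnmwgt1 => ->; rewrite mnmwgtD mnmwgt1 ij; lia.
Qed.

Fact dA_is_linear (N : nat) : linear (@dA N).
Proof.
move=> a p q; rewrite /dA scaler_sumr -big_split /=; apply: eq_bigr => j _.
rewrite scaler_sumr -big_split /=; apply: eq_bigr => i _.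
by rewrite mderivD mderivZ mulrDr scalerAr.
Qed.
HB.instance Definition _ (N : nat) :=
  GRing.isLinear.Build rat _ _ _ (@dA N) (@dA_is_linear N).

Lemma dAX (N : nat) (m : 'X_{1..N}) :
  dA 'X_[m] = \sum_(j < N) \sum_(i < N | i == j.+1 :> nat)
      (m i)%:R *: ('X_[U_(j) + (m - U_(i))] : {mpoly rat[N]}).
Proof.
apply: eq_bigr => j _; apply: eq_bigr => i _.
by rewrite mderivX -scalerAr mpolyXD.
Qed.

Lemma dA_homog (N n : nat) (p : {mpoly rat[N]}) :
  p \is n.-homog for mnmwgt -> dA p \is n.-1.-homog for mnmwgt.
Proof.
move=> /dhomogP p_homog; rewrite (mpolyE p) linear_sum big_seq; apply: rpred_sum => m m_supp.
rewrite linearZ /= dAX; apply/rpredZ/rpred_sum => j _; apply: rpred_sum => i /eqP ij.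
have [->|mi_neq0] := eqVneq (m i) 0%N; first by rewrite scale0r rpred0.
by apply: rpredZ; rewrite dhomogX /= mnmwgt_lower // p_homog.
Qed.

Lemma dA_homog_le1 (N n : nat) (p : {mpoly rat[N]}) :
  (n <= 1)%N -> p \is n.-homog for mnmwgt -> dA p = 0.
Proof.
move=> le_n1 /dhomogP p_homog; rewrite (mpolyE p) linear_sum big_seq big1 // => m.
move=> /p_homog wgt_m; rewrite linearZ /= dAX big1 ?scaler0 // => j _.
rewrite big1 // => i /eqP ij; have := leq_mnmwgt m i; rewrite /= wgt_m ij.
by case: (m i) => [|k]; rewrite ?scale0r //; lia.
Qed.

Definition mtop (N : nat) (m : 'X_{1..N}) : nat := \max_(i < N | m i != 0%N) i.+1.

Lemma leq_mtop (N : nat) (m : 'X_{1..N}) (i : 'I_N) : m i != 0%N -> (i.+1 <= mtop m)%N.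
Proof. exact: (@leq_bigmax_cond _ (fun i : 'I_N => m i != 0%N) (fun i : 'I_N => i.+1)). Qed.

Lemma mtop_max (N : nat) (m : 'X_{1..N}) : (mtop m <= N)%N.
Proof. by apply/bigmax_leqP => i _; exact: ltn_ord. Qed.

Lemma mtopP (N : nat) (m : 'X_{1..N}) : (0 < mnmwgt m)%N ->
  exists2 k : 'I_N, m k != 0%N & mtop m = k.+1 /\ forall i : 'I_N, (k < i)%N -> m i = 0%N.
Proof.
move=> wgt_gt0; have : (0 < #|[pred i : 'I_N | m i != 0%N]|)%N.
  apply/card_gt0P; apply/existsP; apply: contraLR wgt_gt0 => /existsPn m0.
  by rewrite -leqNgt leqn0 /mnmwgt; apply/eqP/big1 => i _; rewrite (eqP (negPn (m0 i))).
case/(eq_bigmax_cond (fun i : 'I_N => i.+1)) => k mk top_m.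
have top_k : mtop m = k.+1 by exact: top_m.
exists k => //; split=> // i lt_ki; apply/eqP; apply: contraTT lt_ki => mi.
by rewrite -leqNgt -ltnS -top_k leq_mtop.
Qed.

Definition dA_range (N n : nat) (q : {mpoly rat[N]}) : Prop :=
  exists2 p, p \is n.-homog for mnmwgt & dA p = q.

Section DARange.
Variables N n : nat.
Implicit Types p q : {mpoly rat[N]}.

Lemma dA_range0 : dA_range n (0 : {mpoly rat[N]}).
Proof. by exists 0; rewrite ?rpred0 ?linear0. Qed.

Lemma dA_rangeD p q : dA_range n p -> dA_range n q -> dA_range n (p + q).
Proof. by move=> [p' ? <-] [q' ? <-]; exists (p' + q'); rewrite ?rpredD ?linearD. Qed.

Lemma dA_rangeZ c p : dA_range n p -> dA_range n (c *: p).
Proof. by move=> [p' ? <-]; exists (c *: p'); rewrite ?rpredZ ?linearZ. Qed.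

Lemma dA_range_sum (I : Type) (r : seq I) (P : pred I) (F : I -> {mpoly rat[N]}) :
  (forall i, P i -> dA_range n (F i)) -> dA_range n (\sum_(i <- r | P i) F i).
Proof. by move=> F_range; apply: big_ind => //; [exact: dA_range0|exact: dA_rangeD]. Qed.

End DARange.

Lemma dA_rangeX_step (N n : nat) (m : 'X_{1..N}) :
  (n <= N)%N -> mnmwgt m = n.-1 -> (0 < n.-1)%N ->
  (forall m', mnmwgt m' = n.-1 -> (mtop m < mtop m')%N ->
     dA_range n ('X_[m'] : {mpoly rat[N]})) ->
  dA_range n ('X_[m] : {mpoly rat[N]}).
Proof.
move=> le_nN wgt_m n1_gt0 IH; rewrite -wgt_m in n1_gt0.
have [k mk [top_m m_above]] := mtopP n1_gt0.
(* The ring has only N variables: this is where n <= N is needed. *)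
have lt_k1N : (k.+1 < N)%N by have := leq_mnmwgt m k; move: mk; nia.
pose k1 := Ordinal lt_k1N; pose mu := (m - U_(k) + U_(k1))%MM.
have m_k : (U_(k) + (m - U_(k)))%MM = m by rewrite addmC submK ?lep1mP.
have mu_k1 : mu k1 = 1%N.
  by rewrite mnmDE mnmBE !mnm1E m_above //= eqxx; case: eqP => // /(congr1 val) /=; lia.
have wgt_mu : mnmwgt mu = n.
  by move: (mnmwgtD U_(k) (m - U_(k))); rewrite m_k mnmwgtD !mnmwgt1 /=; lia.
have dA_mu : dA 'X_[mu] = 'X_[m] + \sum_(j < N | j != k)
    \sum_(i < N | i == j.+1 :> nat) (mu i)%:R *: ('X_[U_(j) + (mu - U_(i))] : {mpoly rat[N]}).
  rewrite dAX (bigD1 k) //= (big_pred1 k1) => [|i]; last by rewrite /= -(inj_eq val_inj).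
  by rewrite mu_k1 scale1r addmK m_k.
set rest := (X in _ = _ + X) in dA_mu.
have -> : 'X_[m] = dA 'X_[mu] - rest by rewrite dA_mu addrK.
apply: dA_rangeD; first by exists 'X_[mu]; rewrite // dhomogX /= wgt_mu.
rewrite -scaleN1r /rest; apply/dA_rangeZ/dA_range_sum => j jk; apply: dA_range_sum => i /eqP ij.
have [->|mu_i] := eqVneq (mu i) 0%N; first by rewrite scale0r; exact: dA_range0.
apply/dA_rangeZ/IH; first by rewrite mnmwgt_lower // wgt_mu.
suff : (U_(j) + (mu - U_(i)))%MM k1 != 0%N by move/leq_mtop; rewrite top_m.
have /negbTE ik1 : i != k1.
  by apply: contra jk => /eqP/(congr1 val) /=; rewrite ij => -[/val_inj ->].
by rewrite mnmDE mnmBE mu_k1 !mnm1E ik1 addn1.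
Qed.

Lemma dA_rangeX (N n : nat) (m : 'X_{1..N}) :
  (n <= N)%N -> mnmwgt m = n.-1 -> (0 < n.-1)%N -> dA_range n ('X_[m] : {mpoly rat[N]}).
Proof.
move=> le_nN wgt_m n1_gt0; have [r] := ubnP (N - mtop m).
elim: r m wgt_m => // r IH m wgt_m lt_r.
apply: dA_rangeX_step => // m' wgt_m' lt_top; apply: IH => //.
by have := mtop_max m'; lia.
Qed.

Lemma dA_surj (N n : nat) (q : {mpoly rat[N]}) :
  (n <= N)%N -> (1 < n)%N -> q \is n.-1.-homog for mnmwgt -> dA_range n q.
Proof.
move=> le_nN lt_1n /dhomogP q_homog; rewrite (mpolyE q) big_seq.
apply/dA_range_sum => m /q_homog wgt_m; apply/dA_rangeZ/dA_rangeX => //; lia.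
Qed.

(* Exponent vectors with entries at most n; those of weight w <= n index the monomial
   basis of the weight-w part. *)
Definition bexp (N n : nat) := {ffun 'I_N -> 'I_n.+1}.

Definition mnm_of (N n : nat) (f : bexp N n) : 'X_{1..N} := [multinom (f i : nat) | i < N].

Definition bexp_of (N n : nat) (m : 'X_{1..N}) : bexp N n := [ffun i => inord (m i)].

Definition wgt_bexp (N n w : nat) : {set bexp N n} := [set f | mnmwgt (mnm_of f) == w].

Lemma mnm_ofE (N n : nat) (f : bexp N n) (i : 'I_N) : mnm_of f i = f i.
Proof. exact: mnmE. Qed.

Lemma mnm_of_inj (N n : nat) : injective (@mnm_of N n).
Proof.
by move=> f g fg; apply/ffunP => i; apply/val_inj; rewrite /= -!mnm_ofE fg.
Qed.

Lemma bexp_ofK (N n : nat) (m : 'X_{1..N}) : (mnmwgt m <= n)%N -> mnm_of (bexp_of n m) = m.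
Proof.
move=> wgt_m; apply/mnmP => i; rewrite mnm_ofE ffunE inordK //.
by have := leq_mnmwgt m i; nia.
Qed.

Lemma mnm_ofK (N n : nat) : cancel (@mnm_of N n) (bexp_of n).
Proof. by move=> f; apply/ffunP => i; rewrite ffunE mnm_ofE inord_val. Qed.

Section Coordinates.
Variables N n w : nat.

Definition coords (p : {mpoly rat[N]}) : 'rV[rat]_#|wgt_bexp N n w| :=
  \row_i p@_(mnm_of (enum_val i)).

Definition polyv (v : 'rV[rat]_#|wgt_bexp N n w|) : {mpoly rat[N]} :=
  \sum_i v 0 i *: 'X_[mnm_of (enum_val i)].

Fact coords_is_linear : linear coords.
Proof. by move=> a p q; apply/rowP => i; rewrite !mxE mcoeffD mcoeffZ. Qed.
HB.instance Definition _ := GRing.isLinear.Build rat _ _ _ coords coords_is_linear.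

Fact polyv_is_linear : linear polyv.
Proof.
move=> a u v; rewrite /polyv scaler_sumr -big_split; apply: eq_bigr => i _.
by rewrite !mxE scalerDl scalerA.
Qed.
HB.instance Definition _ := GRing.isLinear.Build rat _ _ _ polyv polyv_is_linear.

Lemma polyvK : cancel polyv coords.
Proof.
move=> v; apply/rowP => j; rewrite mxE raddf_sum (bigD1 j) //= mcoeffZ mcoeffX eqxx mulr1.
rewrite big1 ?addr0 // => i ij; rewrite mcoeffZ mcoeffX.
by rewrite (inj_eq (inj_comp (@mnm_of_inj N n) enum_val_inj)) (negbTE ij) mulr0.
Qed.

Lemma polyv_inj : injective polyv.
Proof. exact: can_inj polyvK. Qed.

Lemma polyv_homog v : polyv v \is w.-homog for mnmwgt.
Proof.
apply/rpred_sum => i _; apply/rpredZ; rewrite dhomogX /=.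
by have := enum_valP i; rewrite inE.
Qed.

Lemma coordsK (p : {mpoly rat[N]}) : (w <= n)%N -> p \is w.-homog for mnmwgt ->
  polyv (coords p) = p.
Proof.
move=> le_wn p_homog; apply/mpolyP => m; rewrite raddf_sum /=.
have [wgt_m|wgt_m] := eqVneq (mnmwgt m) w; last first.
  rewrite (dhomog_nemf_coeff p_homog wgt_m) big1 // => i _.
  rewrite mcoeffZ mcoeffX; case: eqP => [mE|]; last by rewrite mulr0.
  by have := enum_valP i; rewrite inE mE (negbTE wgt_m).
have m_in : bexp_of n m \in wgt_bexp N n w by rewrite inE bexp_ofK ?wgt_m.
rewrite (bigD1 (enum_rank_in m_in (bexp_of n m))) //= big1 => [|i].
  by rewrite mcoeffZ mcoeffX mxE enum_rankK_in // bexp_ofK ?wgt_m // eqxx mulr1 addr0.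
rewrite -(inj_eq enum_val_inj) enum_rankK_in // mcoeffZ mcoeffX => neq_i.
case: eqP => [mE|_]; last by rewrite mulr0.
by rewrite -mE mnm_ofK eqxx in neq_i.
Qed.

End Coordinates.

Definition dA_mx (N n : nat) : 'M[rat]_(#|wgt_bexp N n n|, #|wgt_bexp N n n.-1|) :=
  lin1_mx (@coords N n n.-1 \o @dA N \o @polyv N n n).

Lemma dA_mxE (N n : nat) (v : 'rV[rat]_#|wgt_bexp N n n|) :
  v *m dA_mx N n = coords n n.-1 (dA (polyv v)).
Proof. by rewrite mul_rV_lin1. Qed.

Lemma Jdeg_kermx (N n : nat) (p : {mpoly rat[N]}) :
  Jdeg n p <-> exists2 v, (v <= kermx (dA_mx N n))%MS & p = polyv v.
Proof.
rewrite /Jdeg whomogE; split=> [[p_homog dp0]|[v /sub_kermxP Dv0 ->]].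
  exists (coords n n p); last by rewrite coordsK.
  by apply/sub_kermxP; rewrite dA_mxE coordsK // dp0 linear0.
split; first exact: polyv_homog.
have dv_homog := dA_homog (polyv_homog v).
by rewrite -(coordsK (leq_pred n) dv_homog) -dA_mxE Dv0 linear0.
Qed.

Lemma rank_dA_mx (N n : nat) : (n <= N)%N ->
  \rank (dA_mx N n) = if (1 < n)%N then #|wgt_bexp N n n.-1| else 0%N.
Proof.
move=> le_nN; case: ltnP => [lt_1n|le_n1].
  suff : row_full (dA_mx N n) by move/eqP.
  rewrite -sub1mx; apply/row_subP => j; apply/submxP.
  have [p p_homog dp] := dA_surj le_nN lt_1n (polyv_homog (row j 1%:M)).
  by exists (coords n n p); rewrite dA_mxE coordsK // dp polyvK.
apply/eqP; rewrite mxrank_eq0; apply/eqP/row_matrixP => i.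
by rewrite rowE dA_mxE (dA_homog_le1 le_n1 (polyv_homog _)) !linear0.
Qed.

Lemma has_dim_rowspace (N m r : nat) (phi : {linear 'rV[rat]_m -> {mpoly rat[N]}})
    (K : 'M[rat]_(r, m)) (S : {mpoly rat[N]} -> Prop) :
  injective phi -> (forall p, S p <-> exists2 v, (v <= K)%MS & p = phi v) ->
  has_dim S (\rank K).
Proof.
move=> phi_inj S_K; pose B := row_base K.
have phi_mulmx (c : 'rV_(\rank K)) : phi (c *m B) = \sum_i c 0 i *: phi (row i B).
  by rewrite mulmx_sum_row linear_sum; apply: eq_bigr => i _; rewrite linearZ.
exists (fun i => phi (row i B)); split.
- move=> i; apply/S_K; exists (row i B) => //.
  by rewrite (submx_trans (row_sub i B)) ?eq_row_base.
- move=> c c0 i; pose cr := \row_i c i.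
  suff /rowP/(_ i) : cr = 0 by rewrite !mxE.
  apply: (row_free_inj (row_base_free K)); apply: phi_inj.
  rewrite mul0mx linear0 phi_mulmx -[RHS]c0.
  by apply: eq_bigr => j _; rewrite mxE.
- move=> p /S_K [v]; rewrite -(eq_row_base K) => /submxP [c ->] ->.
  by exists (fun i => c 0 i); rewrite phi_mulmx.
Qed.

Lemma pffun_onE (I : finType) (n : nat) (P : pred I) (f : {ffun I -> 'I_n.+1}) :
  (f \in pffun_on ord0 P predT) = [forall i, ~~ P i ==> (f i == ord0)].
Proof.
rewrite inE; apply: eq_forallb => i; rewrite /finfun.fmem -[i \in P]/(P i).
by case: (P i); rewrite inE.
Qed.

Lemma coef_prod_geom (R : comNzRingType) (I : finType) (P : pred I) (w : I -> nat) (n : nat) :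
  (\prod_(i | P i) \sum_(j < n.+1) ('X^(w i * j) : {poly R}))`_n =
  #|[set f : {ffun I -> 'I_n.+1} |
     [forall i, ~~ P i ==> (f i == ord0)] & \sum_(i | P i) w i * f i == n]|%:R.
Proof.
rewrite (big_distr_big ord0) coef_sum -sum1_card natr_sum.
rewrite [RHS]big_mkcond [LHS]big_mkcond; apply: eq_bigr => f _.
rewrite pffun_onE inE; case: ifP => //= _.
by rewrite prodrXr coefXn eq_sym; case: (_ == _).
Qed.

(* The weight-n monomials free of x_1, i.e. the partitions of n into parts >= 2
   (f i is the number of parts equal to i+1). *)
Definition partn_ge2 (N n : nat) : {set bexp N n} :=
  [set f in wgt_bexp N n n | [forall i : 'I_N, (i == 0 :> nat) ==> (f i == ord0)]].

Lemma poincare_coef_prod (N n : nat) : (n <= N)%N ->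
  poincare_coef n =
  (\prod_(i < N | (0 < i < n)%N) \sum_(j < n.+1) ('X^(i.+1 * j) : {poly rat}))`_n
  + (n == 1)%:R.
Proof.
move=> le_nN; rewrite /poincare_coef big_add1 big_geq_mkord /=.
rewrite (big_ord_widen_cond N (fun i => 1 <= i)%N
  (fun i => \sum_(j < n.+1) ('X^(i.+1 * j) : {poly rat}))) //.
Qed.

Lemma poincare_coefE (N n : nat) : (n <= N)%N ->
  poincare_coef n = (#|partn_ge2 N n| + (n == 1))%:R.
Proof.
move=> le_nN; rewrite (poincare_coef_prod le_nN) coef_prod_geom natrD; congr (_%:R + _).
apply: eq_card => f; rewrite !inE.
have wgtE : (forall i : 'I_N, ~~ (0 < i < n)%N -> f i = ord0) ->
    mnmwgt (mnm_of f) = (\sum_(i < N | (0 < i < n)%N) i.+1 * f i)%N.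
  move=> f_out; rewrite /mnmwgt (bigID (fun i : 'I_N => (0 < i < n)%N)) /=.
  rewrite [X in (_ + X)%N]big1 ?addn0 => [|i /f_out fi0]; last by rewrite mnm_ofE fi0.
  by apply: eq_bigr => i _; rewrite mnm_ofE mulnC.
apply/idP/idP.
- case/andP => /forallP f_out /eqP wgt_f.
  have {}f_out (i : 'I_N) : ~~ (0 < i < n)%N -> f i = ord0.
    by move=> i_out; apply/eqP; exact: implyP (f_out i) i_out.
  rewrite wgtE // wgt_f eqxx /=; apply/forallP => i; apply/implyP => /eqP i0.
  by rewrite f_out // i0.
- case/andP => wgt_f /forallP f_x1.
  have f_out (i : 'I_N) : ~~ (0 < i < n)%N -> f i = ord0.
    move=> i_out; apply/val_inj => /=; have := leq_mnmwgt (mnm_of f) i.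
    rewrite mnm_ofE (eqP wgt_f); have := implyP (f_x1 i).
    by move: i_out; rewrite -(inj_eq val_inj) /=; nia.
  apply/andP; split; last by rewrite -wgtE.
  by apply/forallP => i; apply/implyP => /f_out ->.
Qed.

Lemma card_wgt_bexp_rec (N n : nat) : (0 < n <= N)%N ->
  #|wgt_bexp N n n| = (#|wgt_bexp N n n.-1| + #|partn_ge2 N n|)%N.
Proof.
case/andP=> n_gt0 le_nN; have x1_lt : (0 < N)%N by lia.
pose x1 := Ordinal x1_lt; pose mulx1 (f : bexp N n) := bexp_of n (mnm_of f + U_(x1))%MM.
have mulx1K f : f \in wgt_bexp N n n.-1 -> mnm_of (mulx1 f) = (mnm_of f + U_(x1))%MM.
  by rewrite inE => /eqP wgt_f; rewrite bexp_ofK // mnmwgtD mnmwgt1 wgt_f /=; lia.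
have partn_ge2E f : (f \in partn_ge2 N n) = (f \in wgt_bexp N n n) && (mnm_of f x1 == 0%N).
  rewrite inE mnm_ofE; congr (_ && _).
  apply/forallP/eqP => [/(_ x1)/implyP/(_ isT)/eqP -> //|fx1 i].
  apply/implyP => /eqP i0; have -> : i = x1 by apply: val_inj.
  by rewrite -(inj_eq val_inj) /= fx1.
have mulx1_inj : {in wgt_bexp N n n.-1 &, injective mulx1}.
  by move=> f g f_in g_in /(congr1 (@mnm_of N n)); rewrite !mulx1K // => /addIm/mnm_of_inj.
have mulx1_img : mulx1 @: wgt_bexp N n n.-1 = wgt_bexp N n n :\: partn_ge2 N n.
  apply/setP => g; rewrite inE partn_ge2E negb_and; apply/imsetP/idP => [[f f_in ->]|].
    move: (f_in); rewrite !inE mulx1K // mnmwgtD mnmwgt1 mnmDE mnm1E eqxx addn1.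
    by move=> /eqP -> /=; lia.
  case/andP => /orP[/negP //|gx1] g_in; rewrite inE in g_in.
  have g_split : (mnm_of g - U_(x1) + U_(x1))%MM = mnm_of g by rewrite submK ?lep1mP.
  have wgt_lower : mnmwgt (mnm_of g - U_(x1)) = n.-1.
    by move: g_in; rewrite -{1}g_split mnmwgtD mnmwgt1 /= => /eqP; lia.
  pose f := bexp_of n (mnm_of g - U_(x1))%MM.
  have fK : mnm_of f = (mnm_of g - U_(x1))%MM by rewrite bexp_ofK // wgt_lower leq_pred.
  have f_in : f \in wgt_bexp N n n.-1 by rewrite inE fK wgt_lower.
  by exists f => //; apply: mnm_of_inj; rewrite mulx1K // fK g_split.
rewrite -(cardsID (partn_ge2 N n) (wgt_bexp N n n)) addnC -mulx1_img card_in_imset //.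
by rewrite (setIidPr _) //; apply/subsetP => f; rewrite partn_ge2E => /andP[].
Qed.

Lemma wgt_bexp0 (N n : nat) : wgt_bexp N n 0 = [set bexp_of n 0%MM].
Proof.
apply/setP => f; rewrite !inE; apply/eqP/eqP => [wgt0|->]; last first.
  by rewrite bexp_ofK mnmwgt0.
rewrite -[f]mnm_ofK; congr bexp_of; apply/mnmP => i.
by have := leq_mnmwgt (mnm_of f) i; rewrite wgt0 mnm0E; nia.
Qed.

Lemma card_wgt_bexp_subE (N n : nat) : (n <= N)%N ->
  (#|wgt_bexp N n n| - (if (1 < n)%N then #|wgt_bexp N n n.-1| else 0))%N =
  (#|partn_ge2 N n| + (n == 1))%N.
Proof.
case: n => [|[|n]] le_nN.
- rewrite subn0 addn0; apply/eq_card => f; rewrite !inE andb_idr // => _.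
  by apply/forallP => i; rewrite ord1 eqxx implybT.
- by rewrite subn0 card_wgt_bexp_rec // wgt_bexp0 cards1 addnC.
- by rewrite card_wgt_bexp_rec // addKn addn0.
Qed.

Theorem mainTheorem10 (n N : nat) (hN : (n <= N)%N) :
  exists k : nat, has_dim (@Jdeg N n) k /\ (k%:R : rat) = poincare_coef n.
Proof.
exists (\rank (kermx (dA_mx N n))); split.
  exact: has_dim_rowspace (@polyv_inj N n n) (@Jdeg_kermx N n).
by rewrite mxrank_ker rank_dA_mx // card_wgt_bexp_subE // (poincare_coefE hN).
Qed.
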